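(* Let $(U,V)$ be a one-dimensional robot game. (1) If $\max(V)\ge -\min(U)$, then every positive counter value is losing. Similarly, if $\min(V)\le -\max(U)$, then every negative counter value is losing. (2) If $\max(U)>-\min(V)$ and there exists a bound $B\in\mathbb{Z}$ such that every counter value greater than $B$ is winning, then every counter value is winning. Similarly, if $\min(U)<-\max(V)$ and there exists a bound $B$ such that every counter value less than $B$ is winning, then every counter value is winning.
   Context: A robot game in dimension one is a pair $(U,V)$ of finite nonempty subsets of $\mathbb{Z}$; $U$ belongs to the reacher and $V$ to the opponent. From an initial counter value $x_0\in\mathbb{Z}$, a play proceeds in rounds: in a round starting at counter value $x$, the opponent chooses $v\in V$ and the counter becomes $x+v$, then the reacher chooses $u\in U$ and the counter becomes $x+v+u$, where the round ends. The reacher wins the play if some round ends at $0$; by convention the reacher wins immediately if the play starts at $0$. Strategies are functions from play prefixes to moves. A counter value $x$ is winning if the reacher has a strategy such that against every opponent strategy the play from $x$ is won by the reacher; it is losing if the opponent has a strategy such that against every reacher strategy the play from $x$ is not won by the reacher. ''Positive'' and ''negative'' mean strictly positive and strictly negative. *)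

From mathcomp Require Import all_boot all_order all_algebra.
Set Implicit Arguments. Unset Strict Implicit. Unset Printing Implicit Defensive.
Import Order.TTheory GRing.Theory Num.Theory.
Local Open Scope ring_scope.

(* A finite set of integers is represented by a sequence (duplicates harmless);
   a robot game (U, V) requires U and V nonempty. *)

Definition seq_max (s : seq int) : int := foldr Num.max (head 0 s) s.
Definition seq_min (s : seq int) : int := foldr Num.min (head 0 s) s.

(* A play prefix is the list of all counter values so far, in chronological
   order (initial value, after opponent's move, after reacher's move, ...).
   A strategy maps play prefixes to moves. *)
Definition strategy := seq int -> int.
Definition valid_strategy (S : seq int) (f : strategy) : Prop :=
  forall h : seq int, f h \in S.

Fixpoint history (opp rea : strategy) (x0 : int) (k : nat) : seq int :=
  match k with
  | 0%N => [:: x0]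
  | k'.+1 =>
      let h := history opp rea x0 k' in
      let h1 := rcons h (last x0 h + opp h) in
      rcons h1 (last x0 h1 + rea h1)
  end.

Definition round_end (opp rea : strategy) (x0 : int) (k : nat) : int :=
  last x0 (history opp rea x0 k).

Definition reacher_wins (opp rea : strategy) (x0 : int) : Prop :=
  x0 = 0 \/ exists k : nat, (0 < k)%N /\ round_end opp rea x0 k = 0.

Definition winning (U V : seq int) (x : int) : Prop :=
  exists rea : strategy, valid_strategy U rea /\
    forall opp : strategy, valid_strategy V opp -> reacher_wins opp rea x.

Definition losing (U V : seq int) (x : int) : Prop :=
  exists opp : strategy, valid_strategy V opp /\
    forall rea : strategy, valid_strategy U rea -> ~ reacher_wins opp rea x.

(** If the opponent has a move [v] that outweighs every reacher move
    ([v + u >= 0] for all [u]), playing [v] forever keeps a positive counter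
    from ever decreasing, so it never reaches 0.  Conversely, a value [x] is
    winning as soon as some reacher move [u] sends [x + v + u] to a winning
    value for every opponent move [v].  If [u] beats every opponent move
    ([v + u > 0]), this backward step lowers the set of known winning values
    by at least 1, so winning above some bound [B] spreads to all of [Z]. *)
From Stdlib Require Import ClassicalEpsilon.
From mathcomp Require Import all_boot all_order all_algebra.
From mathcomp Require Import zify.
Set Implicit Arguments. Unset Strict Implicit. Unset Printing Implicit Defensive.
Import Order.TTheory GRing.Theory Num.Theory.
Local Open Scope ring_scope.

Lemma foldr_max_ge (d : int) (s : seq int) a :
  a \in d :: s -> a <= foldr Num.max d s.
Proof.
elim: s a => [|b s IH] a /=; first by rewrite inE => /eqP->.
rewrite le_max !inE => /or3P[/eqP->|/eqP->|a_s].
- by rewrite IH ?mem_head ?orbT.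
- by rewrite lexx.
- by rewrite IH ?inE ?a_s ?orbT.
Qed.

Lemma foldr_max_mem (d : int) (s : seq int) : foldr Num.max d s \in d :: s.
Proof.
elim: s => [|b s IH] /=; first exact: mem_head.
rewrite !inE; case: leP => _; last by rewrite eqxx orbT.
by move: IH; rewrite inE => /orP[->|->]; rewrite ?orbT.
Qed.

Lemma foldr_min_le (d : int) (s : seq int) a :
  a \in d :: s -> foldr Num.min d s <= a.
Proof.
elim: s a => [|b s IH] a /=; first by rewrite inE => /eqP->.
rewrite ge_min !inE => /or3P[/eqP->|/eqP->|a_s].
- by rewrite IH ?mem_head ?orbT.
- by rewrite lexx.
- by rewrite IH ?inE ?a_s ?orbT.
Qed.

Lemma foldr_min_mem (d : int) (s : seq int) : foldr Num.min d s \in d :: s.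
Proof.
elim: s => [|b s IH] /=; first exact: mem_head.
rewrite !inE; case: leP => _; first by rewrite eqxx orbT.
by move: IH; rewrite inE => /orP[->|->]; rewrite ?orbT.
Qed.

Lemma seq_max_ge (s : seq int) a : a \in s -> a <= seq_max s.
Proof. by case: s => [//|b s] a_s; apply: foldr_max_ge; rewrite inE a_s orbT. Qed.

Lemma seq_max_mem (s : seq int) : s != [::] -> seq_max s \in s.
Proof.
case: s => [//|b s] _; rewrite /seq_max; have := foldr_max_mem b (b :: s).
by rewrite inE => /orP[/eqP->|//]; apply: mem_head.
Qed.

Lemma seq_min_le (s : seq int) a : a \in s -> seq_min s <= a.
Proof. by case: s => [//|b s] a_s; apply: foldr_min_le; rewrite inE a_s orbT. Qed.

Lemma seq_min_mem (s : seq int) : s != [::] -> seq_min s \in s.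
Proof.
case: s => [//|b s] _; rewrite /seq_min; have := foldr_min_mem b (b :: s).
by rewrite inE => /orP[/eqP->|//]; apply: mem_head.
Qed.

Lemma historyS opp rea x k :
  history opp rea x k.+1 =
  let h := history opp rea x k in
  let h1 := rcons h (last x h + opp h) in rcons h1 (last x h1 + rea h1).
Proof. by []. Qed.

Lemma round_endS opp rea x k :
  let h := history opp rea x k in
  round_end opp rea x k.+1 =
  round_end opp rea x k + opp h + rea (rcons h (round_end opp rea x k + opp h)).
Proof. by rewrite /round_end /= !last_rcons. Qed.

Lemma history_head opp rea x k : exists h, history opp rea x k = x :: h.
Proof. by elim: k => [|k [h /= ->]]; [exists [::] | eexists]. Qed.

Lemma losing_pos_of_const_move U V v :
  v \in V -> (forall u, u \in U -> 0 <= v + u) ->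
  forall x, 0 < x -> losing U V x.
Proof.
move=> vV push x x_gt0; exists (fun=> v); split=> // rea reaU.
have ge_x k : x <= round_end (fun=> v) rea x k.
  elim: k => [//|k IH]; rewrite round_endS /=; set r := rea _.
  by have := push r (reaU _); lia.
by case=> [|[k [_ end0]]]; [lia | have := ge_x k; lia].
Qed.

Lemma losing_neg_of_const_move U V v :
  v \in V -> (forall u, u \in U -> v + u <= 0) ->
  forall x, x < 0 -> losing U V x.
Proof.
move=> vV push x x_lt0; exists (fun=> v); split=> // rea reaU.
have le_x k : round_end (fun=> v) rea x k <= x.
  elim: k => [//|k IH]; rewrite round_endS /=; set r := rea _.
  by have := push r (reaU _); lia.
by case=> [|[k [_ end0]]]; [lia | have := le_x k; lia].
Qed.

(* After the first round [x, x + v, x + v + u] the play continues as a play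
   from [x + v + u]: the opponent sees the old prefix prepended, while the
   reacher reads the new start at index 2 and follows [W] of it. *)
Definition shift_strategy (opp : strategy) (x v : int) : strategy :=
  fun h => opp [:: x, x + v & h].

Definition restart_strategy (u : int) (W : int -> strategy) : strategy :=
  fun h => if size h == 2%N then u else W (nth 0 h 2) (drop 2 h).

Lemma history_restart opp u W x k :
  let v := opp [:: x] in
  history opp (restart_strategy u W) x k.+1 =
  [:: x, x + v & history (shift_strategy opp x v) (W (x + v + u)) (x + v + u) k].
Proof.
move=> v; elim: k => [//|k IH]; rewrite historyS IH /=.
have [h eh] := history_head (shift_strategy opp x v) (W (x + v + u)) (x + v + u) k.
by rewrite /restart_strategy /= size_rcons eh /= -eh.
Qed.

Lemma round_end_restart opp u W x k :
  let v := opp [:: x] in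
  round_end opp (restart_strategy u W) x k.+1 =
  round_end (shift_strategy opp x v) (W (x + v + u)) (x + v + u) k.
Proof.
move=> v; rewrite /round_end history_restart /=.
by have [h ->] := history_head (shift_strategy opp x v) (W (x + v + u)) (x + v + u) k.
Qed.

Lemma winning_strategy_choice U V u : u \in U ->
  exists W : int -> strategy, forall y, valid_strategy U (W y) /\
    (winning U V y -> forall opp, valid_strategy V opp -> reacher_wins opp (W y) y).
Proof.
move=> uU.
apply: (choice (fun y (W : strategy) => valid_strategy U W /\
  (winning U V y -> forall opp, valid_strategy V opp -> reacher_wins opp W y))) => y.
case: (excluded_middle_informative (winning U V y)) => [[rea [reaU rea_wins]]|lost].
  by exists rea.
by exists (fun=> u); split=> [_ //|/lost].
Qed.

Lemma winning_of_move U V u x : u \in U ->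
  (forall v, v \in V -> winning U V (x + v + u)) -> winning U V x.
Proof.
move=> uU next_wins.
have [W WU] := winning_strategy_choice V uU.
exists (restart_strategy u W); split.
  by move=> h; rewrite /restart_strategy; case: ifP => // _; case: (WU (nth 0 h 2)).
move=> opp oppV; set v := opp [:: x].
have [_ /(_ (next_wins v (oppV _)) (shift_strategy opp x v) (fun h => oppV _))] :=
  WU (x + v + u).
by case=> [end0|[k [_ end0]]]; right; [exists 1%N | exists k.+1];
  rewrite round_end_restart.
Qed.

Lemma winning_of_winning_above U V u B : u \in U ->
  (forall v, v \in V -> 0 < v + u) -> (forall x, B < x -> winning U V x) ->
  forall x, winning U V x.
Proof.
move=> uU up above.
suff wins n x : B < x + n%:Z -> winning U V x by move=> x; apply: (wins `|B - x|.+1); lia.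
elim: n x => [|n IH] x Bx; first by apply: above; lia.
apply: (winning_of_move uU) => v vV; apply: IH.
by have := up v vV; lia.
Qed.

Lemma winning_of_winning_below U V u B : u \in U ->
  (forall v, v \in V -> v + u < 0) -> (forall x, x < B -> winning U V x) ->
  forall x, winning U V x.
Proof.
move=> uU down below.
suff wins n x : x - n%:Z < B -> winning U V x by move=> x; apply: (wins `|x - B|.+1); lia.
elim: n x => [|n IH] x xB; first by apply: below; lia.
apply: (winning_of_move uU) => v vV; apply: IH.
by have := down v vV; lia.
Qed.

Theorem proposition2 (U V : seq int) (hU : U != [::]) (hV : V != [::]) :
  ((- seq_min U <= seq_max V) -> forall x : int, 0 < x -> losing U V x) /\
  ((seq_min V <= - seq_max U) -> forall x : int, x < 0 -> losing U V x) /\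
  ((- seq_min V < seq_max U) ->
     (exists B : int, forall x : int, B < x -> winning U V x) ->
     forall x : int, winning U V x) /\
  ((seq_min U < - seq_max V) ->
     (exists B : int, forall x : int, x < B -> winning U V x) ->
     forall x : int, winning U V x).
Proof.
split=> [maxV_ge|]; last split=> [minV_le|]; last split=> [maxU_gt [B above]|minU_lt [B below]].
- apply: losing_pos_of_const_move (seq_max_mem hV) _ => u /seq_min_le; lia.
- apply: losing_neg_of_const_move (seq_min_mem hV) _ => u /seq_max_ge; lia.
- apply: winning_of_winning_above (seq_max_mem hU) _ above => v /seq_min_le; lia.
- apply: winning_of_winning_below (seq_min_mem hU) _ below => v /seq_max_ge; lia.
Qed.
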